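(* In the setting of the context, let $(e_i)_{i=1}^d$ be an orthonormal basis of $\mathbb C^d$ and assume: for each $a\in\mathcal A$ there is a deterministic map $f_a:\{1,\dots,d\}\to\{1,\dots,d\}$ such that for $\mathbb P$-a.e. $\omega$ and every $i$, $V_{a;\omega}e_i\in\mathbb C e_{f_a(i)}$, and $\langle V_{a;\omega}e_i,V_{a;\omega}e_j\rangle=0$ whenever $i\ne j$. Suppose there exist $L\in\mathbb N$ and $\varepsilon>0$ such that for $\mathbb P$-a.e. $\omega$ and all $i,j\in\{1,\dots,d\}$, $$\sum_{k=1}^d\min\{\overline P^{(L)}_\omega(i,k),\overline P^{(L)}_\omega(j,k)\}\ge\varepsilon,$$ where $P^{(L)}_{\omega,i}:=\mathbb Q_{\rho^{(i)};\omega}\circ A_{1:L}^{-1}\in\mathcal P(\mathcal A^L)$ with $\rho^{(i)}=|e_i\rangle\langle e_i|$, and $\overline P^{(L)}_\omega(i,k):=\sum_{u\in\mathcal A^L:f_u(i)=k}P^{(L)}_{\omega,i}(u)$. Then there exist, for each $(i,j)\in\{1,\dots,d\}^2$, $\mathcal F$-measurable maps $\omega\mapsto\kappa_{\omega;i,j}\in\mathcal P(\mathcal A^L\times\mathcal A^L)$ such that for $\mathbb P$-a.e. $\omega$ and all $i,j$, $\kappa_{\omega;i,j}$ is a coupling of $\mathbb Q_{\rho^{(i)};\omega}\circ A_{1:L}^{-1}$ and $\mathbb Q_{\rho^{(j)};\omega}\circ A_{1:L}^{-1}$ and $$\kappa_{\omega;i,j}\big(\{(u,v)\in\mathcal A^L\times\mathcal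 A^L: f_u(i)=f_v(j)\}\big)\ge\varepsilon$$ (with the same $L$ and $\varepsilon$).
   Context: Let $d\in\mathbb N$, $\mathcal A$ a finite set, $(\mathcal A^{\mathbb N},\Sigma)$ the sequence space with product $\sigma$-algebra, coordinates $A_n(\bar a)=a_n$ and $A_{1:L}=(A_1,\dots,A_L)$. $(\Omega,\mathcal F,\mathbb P)$ is a probability space and $\theta:\Omega\to\Omega$ is measurable and $\mathbb P$-preserving. For each $a\in\mathcal A$, $\omega\mapsto V_{a;\omega}\in M_d(\mathbb C)$ is measurable with $\sum_aV_{a;\omega}^*V_{a;\omega}=I$ $\mathbb P$-a.s.; $\mathcal T_{a;\omega}(X)=V_{a;\omega}XV_{a;\omega}^*$. For a density matrix $\rho$, the quenched law $\mathbb Q_{\rho;\omega}$ is the probability on $\Sigma$ with $\mathbb Q_{\rho;\omega}(A_1=a_1,\dots,A_n=a_n)=\operatorname{tr}[(\mathcal T_{a_n;\theta^n\omega}\circ\cdots\circ\mathcal T_{a_1;\theta\omega})(\rho)]$. For a word $u=(u_1,\dots,u_L)$, $f_u:=f_{u_L}\circ\cdots\circ f_{u_1}$. $\mathcal P(X)$ denotes the probability measures on a finite set $X$; a coupling of $\mu,\nu$ is a probability on the product with marginals $\mu$ and $\nu$. *)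

From HB Require Import structures.
From mathcomp Require Import all_boot all_order all_algebra.
From mathcomp Require Import all_classical all_reals all_analysis.
From mathcomp Require Import complex.
Set Implicit Arguments. Unset Strict Implicit. Unset Printing Implicit Defensive.
Import Order.TTheory GRing.Theory Num.Theory.
Local Open Scope ring_scope.

Section QT.
Variables (R : realType) (Omega : Type) (A : finType) (d : nat).

Definition adjmx (M : 'M[R[i]]_d) : 'M[R[i]]_d := map_mx (@conjc R) M^T.

Definition word (L : nat) := {ffun 'I_L -> A}.

(* (T_{u_L; theta^L w} o ... o T_{u_1; theta w})(rho), with
   T_{a;w}(X) = V_{a;w} X V_{a;w}^*  (index k : 'I_L is step k+1) *)
Definition evolve (V : A -> Omega -> 'M[R[i]]_d) (theta : Omega -> Omega)
  (w : Omega) (rho : 'M[R[i]]_d) (L : nat) (u : word L) : 'M[R[i]]_d :=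
  foldl (fun X (k : 'I_L) =>
           let M := V (u k) (iter k.+1 theta w) in M *m X *m adjmx M)
        rho (enum 'I_L).

(* Q_{rho;w}(A_{1:L} = u) = tr[(T_{u_L;theta^L w} o ... o T_{u_1;theta w})(rho)]
   (this trace is real; we take its real part as a real number) *)
Definition word_prob V theta w rho L (u : word L) : R :=
  complex.Re (\tr (evolve V theta w rho u)).

Definition fword (f : A -> 'I_d -> 'I_d) L (u : word L) (i : 'I_d) : 'I_d :=
  foldl (fun x (k : 'I_L) => f (u k) x) i (enum 'I_L).

(* rho^(i) = |e_i><e_i|, where e_i is the i-th column of E *)
Definition ketbra (E : 'M[R[i]]_d) (i : 'I_d) : 'M[R[i]]_d :=
  col i E *m map_mx (@conjc R) (col i E)^T.

Definition Pbar V theta w (E : 'M[R[i]]_d) f L (i k : 'I_d) : R :=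
  \sum_(u : word L | fword f u i == k) word_prob V theta w (ketbra E i) u.

End QT.

(* For almost every w the word laws p_i = Q_{rho(i);w} o A_{1:L}^-1 are
   probability vectors: the Kraus maps preserve the trace, rho(i) has unit
   trace, and pure states stay pure along the evolution.  Colour a word u of
   the law p_i by f_u(i).  For two probability vectors p, q with colourings cp,
   cq into a common finite set, glue together a mass
   m(k) = min(p-mass of colour k, q-mass of colour k) inside each colour class
   (proportionally to p and q) and couple the remaining masses independently;
   this is a coupling of p and q giving mass at least sum_k m(k) to pairs of
   equal colour, which is the required bound.  The construction is a rational
   function of the laws, hence of the entries of the V a (theta^n w), so it is
   measurable in w; to get a probability for every w and not only almost
   surely, the laws are first renormalised, which does not change them where
   they already are probability vectors. *)

From HB Require Import structures.
From mathcomp Require Import all_boot all_order all_algebra.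
From mathcomp Require Import all_classical all_reals all_analysis.
From mathcomp Require Import complex measurable_realfun.
Set Implicit Arguments. Unset Strict Implicit. Unset Printing Implicit Defensive.
Import Order.TTheory GRing.Theory Num.Theory.
Local Open Scope ring_scope.
Local Open Scope classical_set_scope.

Section ClassMass.
Variables (R : numFieldType) (I K : finType) (p : I -> R) (c : I -> K).

Definition class_mass (k : K) : R := \sum_(u | c u == k) p u.

Definition class_scale (m : K -> R) (u : I) : R :=
  p u * m (c u) / class_mass (c u).

Lemma class_mass_ge0 k : (forall u, 0 <= p u) -> 0 <= class_mass k.
Proof. by move=> p0; apply: sumr_ge0. Qed.

Lemma sum_class_mass : \sum_k class_mass k = \sum_u p u.
Proof. by rewrite (partition_big c xpredT). Qed.

Lemma class_scale_ge0 m u :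
  (forall u, 0 <= p u) -> (forall k, 0 <= m k) -> 0 <= class_scale m u.
Proof.
by move=> p0 m0; rewrite /class_scale !mulr_ge0 // invr_ge0 class_mass_ge0.
Qed.

Lemma class_scale_le m u : 0 <= p u -> 0 <= m (c u) <= class_mass (c u) ->
  class_scale m u <= p u.
Proof.
move=> p0 /andP[m0 le_m]; rewrite /class_scale -mulrA ler_piMr //.
have [->|nz] := eqVneq (class_mass (c u)) 0; first by rewrite invr0 mulr0.
by rewrite ler_pdivrMr ?mul1r // lt_def nz (le_trans m0 le_m).
Qed.

Section Scaled.
Variable m : K -> R.
Hypothesis m_supp : forall k, class_mass k = 0 -> m k = 0.

Lemma sum_class_scale_in k : \sum_(u | c u == k) class_scale m u = m k.
Proof.
rewrite (eq_bigr (fun u => p u * (m k / class_mass k))); last first.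
  by move=> u /eqP <-; rewrite mulrA.
rewrite -big_distrl -/(class_mass k) /=.
have [/m_supp ->|nz] := eqVneq (class_mass k) 0; first by rewrite mul0r mulr0.
by rewrite mulrCA mulfV ?mulr1.
Qed.

Lemma sum_class_scale : \sum_u class_scale m u = \sum_k m k.
Proof.
rewrite (partition_big c xpredT) //=.
by apply: eq_bigr => k _; exact: sum_class_scale_in.
Qed.

End Scaled.

End ClassMass.

Section ClassOverlap.
Variables (R : realFieldType) (I J K : finType).
Implicit Types (p : I -> R) (q : J -> R) (cp : I -> K) (cq : J -> K).

Definition class_overlap p cp q cq (k : K) : R :=
  Num.min (class_mass p cp k) (class_mass q cq k).

Definition overlap p cp q cq : R := \sum_k class_overlap p cp q cq k.

Definition residual p cp q cq (u : I) : R :=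
  p u - class_scale p cp (class_overlap p cp q cq) u.

Definition glued p cp q cq (uv : I * J) : R :=
  let m := class_overlap p cp q cq in
  if cp uv.1 == cq uv.2 then
    class_scale p cp m uv.1 * class_scale q cq m uv.2 / m (cp uv.1)
  else 0.

End ClassOverlap.

(* When a colour class is empty or [overlap = 1], the divisions here and in
   [glued] are by 0 and yield 0; the corresponding numerators vanish then too. *)
Definition class_coupling (R : realFieldType) (I J K : finType)
    (p : I -> R) (cp : I -> K) (q : J -> R) (cq : J -> K) (uv : I * J) : R :=
  glued p cp q cq uv +
  residual p cp q cq uv.1 * residual q cq p cp uv.2 / (1 - overlap p cp q cq).

Section ClassCouplingSwap.
Variables (R : realFieldType) (I J K : finType).
Variables (p : I -> R) (q : J -> R) (cp : I -> K) (cq : J -> K).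

Lemma class_overlapC : class_overlap q cq p cp = class_overlap p cp q cq.
Proof. by apply/funext => k; rewrite /class_overlap minC. Qed.

Lemma overlapC : overlap q cq p cp = overlap p cp q cq.
Proof. by rewrite /overlap class_overlapC. Qed.

Lemma class_coupling_swap u v :
  class_coupling q cq p cp (v, u) = class_coupling p cp q cq (u, v).
Proof.
rewrite /class_coupling /glued /= overlapC class_overlapC eq_sym.
rewrite [residual q _ _ _ _ * _]mulrC.
by case: eqP => [->|_] //; rewrite [X in X / _]mulrC.
Qed.

End ClassCouplingSwap.

Section ClassOverlapBounds.
Variables (R : realFieldType) (I J K : finType).
Variables (p : I -> R) (q : J -> R) (cp : I -> K) (cq : J -> K).
Hypotheses (p_ge0 : forall u, 0 <= p u) (q_ge0 : forall v, 0 <= q v).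

Lemma class_overlap_ge0 k : 0 <= class_overlap p cp q cq k.
Proof. by rewrite le_min !class_mass_ge0. Qed.

Lemma class_overlap_le k : class_overlap p cp q cq k <= class_mass p cp k.
Proof. by rewrite ge_min lexx. Qed.

Lemma class_overlap_supp k :
  class_mass p cp k = 0 -> class_overlap p cp q cq k = 0.
Proof.
by move=> m0; apply/eqP; rewrite eq_le class_overlap_ge0 -m0 class_overlap_le.
Qed.

Lemma residual_ge0 u : 0 <= residual p cp q cq u.
Proof.
by rewrite subr_ge0 class_scale_le // class_overlap_ge0 class_overlap_le.
Qed.

End ClassOverlapBounds.

Section ResidualMass.
Variables (R : realFieldType) (I J K : finType).
Variables (p : I -> R) (q : J -> R) (cp : I -> K) (cq : J -> K).
Hypotheses (p_ge0 : forall u, 0 <= p u) (q_ge0 : forall v, 0 <= q v).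
Hypothesis p_sum1 : \sum_u p u = 1.

Lemma overlap_le1 : overlap p cp q cq <= 1.
Proof.
rewrite -p_sum1 -(sum_class_mass p cp); apply: ler_sum => k _.
exact: class_overlap_le.
Qed.

Lemma sum_residual : \sum_u residual p cp q cq u = 1 - overlap p cp q cq.
Proof.
rewrite sumrB p_sum1 sum_class_scale //.
exact: class_overlap_supp.
Qed.

End ResidualMass.

Section ClassCouplingMarginals.
Variables (R : realFieldType) (I J K : finType).
Variables (p : I -> R) (q : J -> R) (cp : I -> K) (cq : J -> K).
Hypotheses (p_ge0 : forall u, 0 <= p u) (q_ge0 : forall v, 0 <= q v).
Hypotheses (p_sum1 : \sum_u p u = 1) (q_sum1 : \sum_v q v = 1).

Local Notation m := (class_overlap p cp q cq).
Local Notation M := (overlap p cp q cq).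

Lemma glued_ge0 uv : 0 <= glued p cp q cq uv.
Proof.
have m_ge0 k : 0 <= m k by exact: class_overlap_ge0.
rewrite /glued; case: ifP => // _.
by rewrite mulr_ge0 ?invr_ge0 // mulr_ge0 // class_scale_ge0.
Qed.

Lemma class_coupling_ge0 uv : 0 <= class_coupling p cp q cq uv.
Proof.
rewrite addr_ge0 ?glued_ge0 // !mulr_ge0 ?residual_ge0 //.
by rewrite invr_ge0 subr_ge0 overlap_le1.
Qed.

Lemma sum_glued_l u : \sum_v glued p cp q cq (u, v) = class_scale p cp m u.
Proof.
have supp_q k : class_mass q cq k = 0 -> m k = 0.
  by rewrite -class_overlapC; exact: class_overlap_supp.
rewrite /glued /= -big_mkcond /=.
under eq_bigl do rewrite eq_sym.
under eq_bigr do rewrite mulrAC.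
rewrite -big_distrr /= sum_class_scale_in //.
have [m0|nz] := eqVneq (m (cp u)) 0; last by rewrite divfK.
by rewrite /class_scale m0 !(mulr0, mul0r).
Qed.

Lemma sum_class_coupling_l u : \sum_v class_coupling p cp q cq (u, v) = p u.
Proof.
rewrite big_split /= sum_glued_l.
under eq_bigr do rewrite mulrAC.
rewrite -big_distrr /= sum_residual // (overlapC p q).
have -> : residual p cp q cq u / (1 - M) * (1 - M) = residual p cp q cq u.
  have [M1|nz] := eqVneq (1 - M) 0; last by rewrite divfK.
  have /psumr_eq0P res0 : \sum_u residual p cp q cq u = 0.
    by rewrite sum_residual.
  by rewrite res0 ?mul0r // => *; exact: residual_ge0.
by rewrite /residual addrC subrK.
Qed.

Lemma sum_class_coupling : \sum_uv class_coupling p cp q cq uv = 1.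
Proof.
rewrite -p_sum1 -(pair_bigA _ (fun u v => class_coupling p cp q cq (u, v))).
by apply: eq_bigr => u _; rewrite sum_class_coupling_l.
Qed.

Lemma overlap_le_class_coupling_match :
  M <= \sum_(uv | cp uv.1 == cq uv.2) class_coupling p cp q cq uv.
Proof.
have -> : M = \sum_(uv | cp uv.1 == cq uv.2) glued p cp q cq uv.
  rewrite /overlap -(sum_class_scale (p := p) (c := cp) (m := m)); last first.
    exact: class_overlap_supp.
  under eq_bigr do rewrite -sum_glued_l.
  rewrite pair_bigA [RHS]big_mkcond /=; apply: eq_bigr => -[u v] _.
  by rewrite /glued; case: ifP.
apply: ler_sum => uv _; rewrite lerDl !mulr_ge0 ?residual_ge0 //.
by rewrite invr_ge0 subr_ge0 overlap_le1.
Qed.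

End ClassCouplingMarginals.

Lemma sum_class_coupling_r (R : realFieldType) (I J K : finType)
    (p : I -> R) (q : J -> R) (cp : I -> K) (cq : J -> K) v :
  (forall u, 0 <= p u) -> (forall v, 0 <= q v) ->
  \sum_u p u = 1 -> \sum_v q v = 1 ->
  \sum_u class_coupling p cp q cq (u, v) = q v.
Proof.
move=> p_ge0 q_ge0 p_sum1 q_sum1.
under eq_bigr do rewrite -class_coupling_swap.
exact: sum_class_coupling_l.
Qed.

Section ToProb.
Variables (R : realFieldType) (I : finType).
Implicit Types (p : I -> R).

Definition to_prob p u0 (u : I) : R :=
  let S := \sum_v Num.max (p v) 0 in
  (Num.max (p u) 0 + (if u == u0 then Num.max (1 - S) 0 else 0)) / Num.max S 1.

Lemma to_prob_ge0 p u0 u : 0 <= to_prob p u0 u.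
Proof.
rewrite /to_prob mulr_ge0 ?invr_ge0 ?le_max ?ler01 ?orbT // addr_ge0 //.
  by rewrite le_max lexx orbT.
by case: ifP => // _; rewrite le_max lexx orbT.
Qed.

Lemma sum_to_prob p u0 : \sum_u to_prob p u0 u = 1.
Proof.
rewrite /to_prob -big_distrl /= big_split /= -big_mkcond big_pred1_eq.
set S := \sum_v Num.max (p v) 0.
have [S_ge1|S_lt1] := leP 1 S.
  rewrite max_r ?subr_le0 // addr0 mulfV // gt_eqF //.
  exact: lt_le_trans ltr01 S_ge1.
by rewrite max_l ?subr_ge0 ?ltW // addrC subrK divr1.
Qed.

Lemma to_prob_id p u0 :
  (forall u, 0 <= p u) -> \sum_u p u = 1 -> to_prob p u0 = p.
Proof.
move=> p_ge0 p_sum1; apply/funext => u; rewrite /to_prob.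
have -> : \sum_v Num.max (p v) 0 = 1.
  by rewrite -p_sum1; apply: eq_bigr => v _; rewrite max_l.
by rewrite subrr maxxx max_l // if_same addr0 maxxx invr1 mulr1.
Qed.

End ToProb.

Lemma measurable_inv (R : realType) : measurable_fun [set: R] (@GRing.inv R).
Proof.
have -> : @GRing.inv R = (fun x => if x == 0 then 0 else x^-1).
  by apply/funext => x; case: eqP => // ->; rewrite invr0.
apply: measurable_fun_if => //; first exact: measurable_fun_eqr.
have -> : [set: R] `&` (fun x : R => x == 0) @^-1` [set false] = ~` [set 0].
  by apply/seteqP; split => x /=; [case=> _ /eqP | move=> /eqP /negbTE ->].
apply: open_continuous_measurable_fun; first exact/closed_openC/closed_eq.
by move=> x; rewrite inE /= => /eqP x_neq0; apply: inv_continuous.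
Qed.

Lemma measurable_iter (d0 : measure_display) (Omega : measurableType d0)
    (theta : Omega -> Omega) n :
  measurable_fun setT theta -> measurable_fun setT (iter n theta).
Proof.
move=> mtheta; elim: n => [|n IHn]; first exact: measurable_id.
exact: measurableT_comp mtheta IHn.
Qed.

Section MeasurableCoupling.
Context (R : realType) (d0 : measure_display) (Omega : measurableType d0).
Local Notation mf f := (measurable_fun [set: Omega] (f : Omega -> R)).

Lemma measurable_funV (f : Omega -> R) : mf f -> mf (fun w => (f w)^-1).
Proof. by move=> mf_f; exact: measurableT_comp (@measurable_inv R) mf_f. Qed.

Lemma measurable_to_prob (I : finType) (p : Omega -> I -> R) u0 u :
  (forall u, mf (fun w => p w u)) -> mf (fun w => to_prob (p w) u0 u).
Proof.
move=> mp; have m_pos v : mf (fun w => Num.max (p w v) 0).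
  exact: measurable_maxr (mp v) (measurable_cst _).
have m_tot : mf (fun w => \sum_v Num.max (p w v) 0) by exact: measurable_sum.
apply: measurable_funM; last exact/measurable_funV/measurable_maxr.
apply: measurable_funD => //; case: eqP => _; last exact: measurable_cst.
have m_deficit : mf (fun w => 1 - \sum_v Num.max (p w v) 0).
  exact: measurable_funB (measurable_cst _) m_tot.
exact: measurable_maxr m_deficit (measurable_cst _).
Qed.

Lemma measurable_class_mass (I K : finType) (p : Omega -> I -> R)
    (c : I -> K) k :
  (forall u, mf (fun w => p w u)) -> mf (fun w => class_mass (p w) c k).
Proof.
move=> mp; rewrite /class_mass; under eq_fun do rewrite big_mkcond.
by apply: measurable_sum => u; case: eqP.
Qed.

Lemma measurable_class_scale (I K : finType) (p : Omega -> I -> R) (c : I -> K)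
    (m : Omega -> K -> R) u :
  (forall u, mf (fun w => p w u)) -> (forall k, mf (fun w => m w k)) ->
  mf (fun w => class_scale (p w) c (m w) u).
Proof.
move=> mp mm; apply: measurable_funM; first exact: measurable_funM.
exact/measurable_funV/measurable_class_mass.
Qed.

Lemma measurable_class_overlap (I J K : finType) (p : Omega -> I -> R)
    (cp : I -> K) (q : Omega -> J -> R) (cq : J -> K) k :
  (forall u, mf (fun w => p w u)) -> (forall v, mf (fun w => q w v)) ->
  mf (fun w => class_overlap (p w) cp (q w) cq k).
Proof.
by move=> mp mq; apply: measurable_minr; exact: measurable_class_mass.
Qed.

Lemma measurable_class_coupling (I J K : finType) (p : Omega -> I -> R)
    (cp : I -> K) (q : Omega -> J -> R) (cq : J -> K) uv :
  (forall u, mf (fun w => p w u)) -> (forall v, mf (fun w => q w v)) ->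
  mf (fun w => class_coupling (p w) cp (q w) cq uv).
Proof.
move=> mp mq; have m_ovl k := measurable_class_overlap cp cq k mp mq.
have m_res_p u : mf (fun w => residual (p w) cp (q w) cq u).
  exact: measurable_funB (mp u) (measurable_class_scale cp u mp m_ovl).
have m_ovl' k := measurable_class_overlap cq cp k mq mp.
have m_res_q v : mf (fun w => residual (q w) cq (p w) cp v).
  exact: measurable_funB (mq v) (measurable_class_scale cq v mq m_ovl').
apply: measurable_funD.
  rewrite /glued; case: eqP => _; last exact: measurable_cst.
  apply: measurable_funM; last exact: measurable_funV.
  exact: measurable_funM (measurable_class_scale _ _ mp m_ovl)
                         (measurable_class_scale _ _ mq m_ovl).
apply: measurable_funM; first exact: measurable_funM.
apply/measurable_funV/measurable_funB; first exact: measurable_cst.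
exact: measurable_sum.
Qed.

End MeasurableCoupling.

Section ComplexParts.
Variable R : rcfType.
Implicit Types x y : R[i].

Lemma complexReD x y : complex.Re (x + y) = complex.Re x + complex.Re y.
Proof. by case: x; case: y. Qed.

Lemma complexImD x y : complex.Im (x + y) = complex.Im x + complex.Im y.
Proof. by case: x; case: y. Qed.

Lemma complexReM x y :
  complex.Re (x * y) =
    complex.Re x * complex.Re y - complex.Im x * complex.Im y.
Proof. by case: x; case: y. Qed.

Lemma complexImM x y :
  complex.Im (x * y) =
    complex.Re x * complex.Im y + complex.Im x * complex.Re y.
Proof. by case: x; case: y. Qed.

Lemma complexReJ x : complex.Re (conjc x) = complex.Re x.
Proof. by case: x. Qed.

Lemma complexImJ x : complex.Im (conjc x) = - complex.Im x.
Proof. by case: x. Qed.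

Lemma complexRe_sum (I : finType) (F : I -> R[i]) :
  complex.Re (\sum_i F i) = \sum_i complex.Re (F i).
Proof. by elim/big_rec2: _ => // i x y _ <-; rewrite complexReD. Qed.

End ComplexParts.

Section ComplexMeasurable.
Context (R : realType) (d0 : measure_display) (Omega : measurableType d0).
Local Notation mf f := (measurable_fun [set: Omega] (f : Omega -> R)).

Definition cmeasurable_fun (g : Omega -> R[i]) : Prop :=
  mf (fun w => complex.Re (g w)) /\ mf (fun w => complex.Im (g w)).

Lemma cmeasurable_cst c : cmeasurable_fun (fun _ => c).
Proof. by split; exact: measurable_cst. Qed.

Lemma cmeasurableD f g : cmeasurable_fun f -> cmeasurable_fun g ->
  cmeasurable_fun (fun w => f w + g w).
Proof.
move=> [mf1 mf2] [mg1 mg2]; split.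
  by under eq_fun do rewrite complexReD; exact: measurable_funD.
by under eq_fun do rewrite complexImD; exact: measurable_funD.
Qed.

Lemma cmeasurableM f g : cmeasurable_fun f -> cmeasurable_fun g ->
  cmeasurable_fun (fun w => f w * g w).
Proof.
move=> [mf1 mf2] [mg1 mg2]; split.
  by under eq_fun do rewrite complexReM; apply: measurable_funB;
    exact: measurable_funM.
by under eq_fun do rewrite complexImM; apply: measurable_funD;
  exact: measurable_funM.
Qed.

Lemma cmeasurableJ f :
  cmeasurable_fun f -> cmeasurable_fun (fun w => conjc (f w)).
Proof.
move=> [mf1 mf2]; split; first by under eq_fun do rewrite complexReJ.
by under eq_fun do rewrite complexImJ; exact: measurable_funN.
Qed.

Lemma cmeasurable_sum (I : Type) (s : seq I) (F : I -> Omega -> R[i]) :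
  (forall i, cmeasurable_fun (F i)) ->
  cmeasurable_fun (fun w => \sum_(i <- s) F i w).
Proof.
move=> mF; elim: s => [|i s IHs].
  by under eq_fun do rewrite big_nil; exact: cmeasurable_cst.
by under eq_fun do rewrite big_cons; exact: cmeasurableD.
Qed.

Variable d : nat.

Definition mx_cmeasurable (X : Omega -> 'M[R[i]]_d) : Prop :=
  forall i j, cmeasurable_fun (fun w => X w i j).

Lemma mx_cmeasurable_cst M : mx_cmeasurable (fun _ => M).
Proof. by move=> i j; exact: cmeasurable_cst. Qed.

Lemma mx_cmeasurableM X Y : mx_cmeasurable X -> mx_cmeasurable Y ->
  mx_cmeasurable (fun w => X w *m Y w).
Proof.
move=> mX mY i j; under eq_fun do rewrite mxE.
by apply: cmeasurable_sum => k; exact: cmeasurableM.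
Qed.

Lemma mx_cmeasurable_adj X : mx_cmeasurable X ->
  mx_cmeasurable (fun w => adjmx (X w)).
Proof. by move=> mX i j; under eq_fun do rewrite !mxE; exact: cmeasurableJ. Qed.

Lemma mx_cmeasurable_foldl_conj (T : Type) (F : T -> Omega -> 'M[R[i]]_d) s X :
  (forall t, mx_cmeasurable (F t)) -> mx_cmeasurable X ->
  mx_cmeasurable (fun w =>
    foldl (fun Y t => F t w *m Y *m adjmx (F t w)) (X w) s).
Proof.
move=> mF; elim: s X => [|t s IHs] X mX //=; apply: IHs.
by apply: mx_cmeasurableM; [exact: mx_cmeasurableM | exact: mx_cmeasurable_adj].
Qed.

Lemma measurable_word_prob (A : finType) (V : A -> Omega -> 'M[R[i]]_d)
    (theta : Omega -> Omega) rho L (u : word A L) :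
  measurable_fun setT theta -> (forall a, mx_cmeasurable (V a)) ->
  mf (fun w => word_prob V theta w rho u).
Proof.
move=> mtheta mV; rewrite /word_prob /evolve.
have mVu k : mx_cmeasurable (fun w => V (u k) (iter k.+1 theta w)).
  move=> i j; have [mRe mIm] := mV (u k) i j.
  have miter := measurable_iter k.+1 mtheta.
  split; first exact: measurableT_comp mRe miter.
  exact: measurableT_comp mIm miter.
have mfold :=
  mx_cmeasurable_foldl_conj (enum 'I_L) mVu (mx_cmeasurable_cst rho).
by case: (cmeasurable_sum (index_enum 'I_d) (fun i => mfold i i)).
Qed.

End ComplexMeasurable.

Lemma foldl_map (T1 T2 S : Type) (g : S -> T2 -> S) (h : T1 -> T2) x s :
  foldl g x (map h s) = foldl (fun y t => g y (h t)) x s.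
Proof. by elim: s x => [|t s IHs] x //=. Qed.

Section WordLaws.
Context (R : realType) (Omega : Type) (A : finType) (d : nat).
Context (V : A -> Omega -> 'M[R[i]]_d) (theta : Omega -> Omega).

Definition kraus_complete (w : Omega) : Prop :=
  \sum_a adjmx (V a w) *m V a w = 1%:M.

Definition adjcv (y : 'cV[R[i]]_d) : 'rV[R[i]]_d := map_mx conjc y^T.

Lemma adjcv_mul (M : 'M[R[i]]_d) y : adjcv (M *m y) = adjcv y *m adjmx M.
Proof. by rewrite /adjcv /adjmx trmx_mul map_mxM. Qed.

Lemma foldl_conj_rank1 (T : Type) (F : T -> 'M[R[i]]_d) s y :
  exists z, foldl (fun X t => F t *m X *m adjmx (F t)) (y *m adjcv y) s
            = z *m adjcv z.
Proof.
elim: s y => [|t s IHs] y /=; first by exists y.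
have -> : F t *m (y *m adjcv y) *m adjmx (F t) = F t *m y *m adjcv (F t *m y).
  by rewrite adjcv_mul !mulmxA.
exact: IHs.
Qed.

Lemma Re_mxtrace_rank1_ge0 z : 0 <= complex.Re (\tr (z *m adjcv z)).
Proof.
have Re_ge0 (x : R[i]) : 0 <= x -> 0 <= complex.Re x by rewrite lecE => /andP[].
rewrite Re_ge0 // sumr_ge0 // => k _; rewrite mxE sumr_ge0 // => l _.
by rewrite !mxE mulcJ_ge0.
Qed.

Lemma word_prob_ketbra_ge0 w E i L (u : word A L) :
  0 <= word_prob V theta w (ketbra E i) u.
Proof.
rewrite /word_prob /evolve /ketbra.
have [z ->] := foldl_conj_rank1
  (fun k : 'I_L => V (u k) (iter k.+1 theta w)) (enum 'I_L) (col i E).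
exact: Re_mxtrace_rank1_ge0.
Qed.

Lemma mxtrace_ketbra (E : 'M[R[i]]_d) i : adjmx E *m E = 1%:M ->
  \tr (ketbra E i) = 1.
Proof.
move=> E_unitary; rewrite /ketbra mxtrace_mulC /mxtrace big_ord1.
have := congr1 (fun M : 'M[R[i]]_d => M i i) E_unitary.
by rewrite !mxE eqxx mulr1n => <-; apply: eq_bigr => k _; rewrite !mxE.
Qed.

Definition word_rcons L (u : word A L) (a : A) : word A L.+1 :=
  [ffun k : 'I_L.+1 => oapp u a (insub (val k))].

Lemma word_rcons_widen L (u : word A L) a k :
  word_rcons u a (widen_ord (leqnSn L) k) = u k.
Proof.
rewrite ffunE /=; case: insubP => [k' _ k'E|]; last by rewrite /= ltn_ord.
by congr (u _); apply: val_inj.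
Qed.

Lemma word_rcons_last L (u : word A L) a : word_rcons u a ord_max = a.
Proof. by rewrite ffunE /= insubN // ltnn. Qed.

Lemma big_word_rcons (U : nmodType) L (F : word A L.+1 -> U) :
  \sum_(u : word A L.+1) F u =
    \sum_(u : word A L) \sum_(a : A) F (word_rcons u a).
Proof.
pose split_last (u : word A L.+1) :=
  ([ffun k => u (widen_ord (leqnSn L) k)], u ord_max).
rewrite pair_bigA /= (reindex (fun ua => word_rcons ua.1 ua.2)) //.
exists split_last => [[u a] _|u _].
  rewrite /split_last word_rcons_last; congr (_, _).
  by apply/ffunP => k; rewrite ffunE word_rcons_widen.
apply/ffunP => k; rewrite ffunE /=; case: insubP => [k' _ k'E|].
  by rewrite /= ffunE; congr (u _); apply: val_inj.
rewrite -leqNgt => k_ge; congr (u _); apply/val_inj/eqP => /=.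
by rewrite eqn_leq k_ge -ltnS ltn_ord.
Qed.

Lemma evolve_rcons w rho L (u : word A L) a :
  let M := V a (iter L.+1 theta w) in
  evolve V theta w rho (word_rcons u a) =
    M *m evolve V theta w rho u *m adjmx M.
Proof.
rewrite /evolve enum_ordSr foldl_rcons foldl_map word_rcons_last /=.
congr (_ *m _ *m _); congr foldl.
by apply/funext => X; apply/funext => k; rewrite word_rcons_widen.
Qed.

Lemma sum_mxtrace_evolve w rho L :
  (forall n, kraus_complete (iter n theta w)) ->
  \sum_(u : word A L) \tr (evolve V theta w rho u) = \tr rho.
Proof.
move=> kraus; elim: L => [|L IHL].
  have enum0 : enum 'I_0 = [::] by apply: size0nil; rewrite size_enum_ord.
  by rewrite /evolve enum0 /= sumr_const card_ffun card_ord expn0.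
rewrite big_word_rcons -IHL; apply: eq_bigr => u _.
under eq_bigr do rewrite evolve_rcons mxtrace_mulC mulmxA.
by rewrite -raddf_sum /= -mulmx_suml (kraus L.+1) mul1mx.
Qed.

Lemma sum_word_prob_ketbra w E i L :
  (forall n, kraus_complete (iter n theta w)) ->
  adjmx E *m E = 1%:M ->
  \sum_(u : word A L) word_prob V theta w (ketbra E i) u = 1.
Proof.
move=> kraus E_unitary; rewrite /word_prob -complexRe_sum.
by rewrite sum_mxtrace_evolve // mxtrace_ketbra.
Qed.

End WordLaws.

Section AlmostEverywhere.
Context (R : realType) (d0 : measure_display) (Omega : measurableType d0).
Context (P : probability Omega R).

Lemma ae_exists (Q : Omega -> Prop) : {ae P, forall w, Q w} -> exists w, Q w.
Proof.
case=> N [mN PN0 notQ_N]; apply: contrapT => noQ.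
suff : P setT = 0 by rewrite probability_setT => /eqP; rewrite eqe oner_eq0.
apply: (subset_measure0 measurableT mN) => // w _; apply: notQ_N => /= Qw.
by apply: noQ; exists w.
Qed.

Context (theta : Omega -> Omega).
Hypotheses (mtheta : measurable_fun setT theta)
  (theta_pres : forall B : set Omega, measurable B -> P (theta @^-1` B) = P B).

Lemma measure_preimage_iter n (B : set Omega) : measurable B ->
  P (iter n theta @^-1` B) = P B.
Proof.
elim: n B => [|n IHn] B mB //=.
have -> : iter n.+1 theta @^-1` B = iter n theta @^-1` (theta @^-1` B) by [].
rewrite IHn ?theta_pres //.
by rewrite -[_ @^-1` B]setTI; exact: mtheta.
Qed.

Lemma ae_iter n (Q : Omega -> Prop) :
  {ae P, forall w, Q w} -> {ae P, forall w, Q (iter n theta w)}.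
Proof.
case=> N [mN PN0 notQ_N]; exists (iter n theta @^-1` N); split.
- by rewrite -[_ @^-1` N]setTI; exact: measurable_iter.
- by rewrite measure_preimage_iter.
- by move=> w /= notQw; apply: notQ_N.
Qed.

End AlmostEverywhere.

Theorem proposition5 (R : realType) (d0 : measure_display)
  (Omega : measurableType d0) (P : probability Omega R)
  (theta : Omega -> Omega) (A : finType) (d : nat)
  (V : A -> Omega -> 'M[R[i]]_d) (E : 'M[R[i]]_d)
  (f : A -> 'I_d -> 'I_d) (L : nat) (eps : R) :
  measurable_fun setT theta ->
  (forall B : set Omega, measurable B -> P (theta @^-1` B) = P B) ->
  (forall a i j, measurable_fun setT (fun w => complex.Re (V a w i j)) /\
                 measurable_fun setT (fun w => complex.Im (V a w i j))) ->
  {ae P, forall w, \sum_(a : A) adjmx (V a w) *m V a w = 1%:M} ->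
  adjmx E *m E = 1%:M ->
  {ae P, forall w, forall (a : A) (i : 'I_d),
      exists c : R[i], V a w *m col i E = c *: col (f a i) E} ->
  {ae P, forall w, forall (a : A) (i j : 'I_d), i != j ->
      map_mx (@conjc R) (V a w *m col i E)^T *m (V a w *m col j E) = 0} ->
  0 < eps ->
  {ae P, forall w, forall i j : 'I_d,
      eps <= \sum_(k : 'I_d) Num.min (Pbar V theta w E f L i k)
                                     (Pbar V theta w E f L j k)} ->
  exists kappa : 'I_d -> 'I_d -> Omega -> (word A L * word A L) -> R,
    (forall i j uv, measurable_fun setT (fun w => kappa i j w uv)) /\
    (forall i j w, (forall uv, 0 <= kappa i j w uv) /\
                   \sum_(uv : word A L * word A L) kappa i j w uv = 1) /\
    {ae P, forall w, forall i j : 'I_d,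
       (forall u : word A L, \sum_(v : word A L) kappa i j w (u, v)
                  = word_prob V theta w (ketbra E i) u) /\
       (forall v : word A L, \sum_(u : word A L) kappa i j w (u, v)
                  = word_prob V theta w (ketbra E j) v) /\
       eps <= \sum_(uv : word A L * word A L | fword f uv.1 i == fword f uv.2 j)
                 kappa i j w uv}.
Proof.
move=> mtheta theta_pres mV kraus_ae E_unitary _ _ eps_gt0 overlap_ae.
have kraus : {ae P, forall w n, kraus_complete V (iter n theta w)}.
  apply: ae_foralln => n.
  exact: (ae_iter mtheta theta_pres n (Q := kraus_complete V)).
have word0 (i : 'I_d) : exists u : word A L, true.
  have [w /(_ i i)] := ae_exists overlap_ae.
  have [u _ _|no_word] := pickP (fun _ : word A L => true); first by exists u.
  rewrite big1 => [|k _]; first by rewrite leNgt eps_gt0.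
  by rewrite /Pbar !big1 ?minxx // => u; have := no_word u.
pose p i w (u : word A L) := word_prob V theta w (ketbra E i) u.
pose law i w := to_prob (p i w) (xchoose (word0 i)).
pose colour i (u : word A L) := fword f u i.
exists (fun i j w => class_coupling (law i w) (colour i) (law j w) (colour j)).
split=> [i j uv|].
  by apply: measurable_class_coupling => ?; apply: measurable_to_prob => ?;
    exact: measurable_word_prob.
split=> [i j w|].
  by split=> [uv|]; [apply: class_coupling_ge0 | apply: sum_class_coupling];
    move=> *; rewrite ?to_prob_ge0 ?sum_to_prob.
apply: filterS2 kraus overlap_ae => w kraus_w overlap_w i j.
have p_ge0 k u : 0 <= p k w u by exact: word_prob_ketbra_ge0.
have p_sum1 k : \sum_u p k w u = 1 by exact: sum_word_prob_ketbra.
rewrite /law !to_prob_id //; split; [|split] => [u|v|].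
- exact: sum_class_coupling_l.
- exact: sum_class_coupling_r.
- (* [overlap] of the two laws unfolds to the sum of minima of the [Pbar]. *)
  exact: le_trans (overlap_w i j)
    (overlap_le_class_coupling_match _ _ (p_ge0 i) (p_ge0 j) (p_sum1 i)).
Qed.
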